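(* Let $k\ge 1$, let $\mu_{\text{ns}}\in\mathbb{R}^{d_{\text{ns}}}$, $\Sigma_{\text{ns}}\in\mathbb{S}^{d_{\text{ns}}}_{++}$, and for each $i\in[k]$ let $\mu_i\in\mathbb{R}^{d_{\text{sp}}}$, $\Sigma_i\in\mathbb{S}^{d_{\text{sp}}}_{++}$. In environment $e_i$, data is generated as follows: $y=1$ with probability $\eta$ and $y=-1$ otherwise; conditionally on $Y=y$, ${\mathbf x}_{\text{ns}}\sim\mathcal{N}(y\mu_{\text{ns}},\Sigma_{\text{ns}})$ and ${\mathbf x}_{\text{sp}}\sim\mathcal{N}(y\mu_i,\Sigma_i)$, drawn independently; and ${\mathbf x}=[{\mathbf x}_{\text{ns}},{\mathbf x}_{\text{sp}}]$. Let $\sigma:\mathbb{R}\to(0,1)$ be an invertible function and consider the classifier $f({\mathbf x};{\mathbf w},b)=\sigma({\mathbf w}^\top{\mathbf x}-b)$ with ${\mathbf w}=[{\mathbf w}_{\text{ns}},{\mathbf w}_{\text{sp}}]$ decomposed into coefficients of the invariant and spurious features. If $f$ is calibrated on all $k$ environments, then either ${\mathbf w}=\mathbf{0}$ or there exists $t\neq 0$ such that $$\frac{{\mathbf w}_{\text{ns}}^\top\mu_{\text{ns}}+{\mathbf w}_{\text{sp}}^\top\mu_i}{{\mathbf w}_{\text{ns}}^\top\Sigma_{\text{ns}}{\mathbf w}_{\text{ns}}+{\mathbf w}_{\text{sp}}^\top\Sigma_i{\mathbf w}_{\text{sp}}}=t\quad\text{for all } i\in[k].$$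
   Context: $\mathbb{S}^d_{++}$ denotes the set of $d\times d$ symmetric positive definite matrices, and $[k]=\{1,\dots,k\}$. A classifier $f$ with values in $(0,1)$ is calibrated on the environments $e_1,\dots,e_k$ if for each $i\in[k]$ and every $\alpha$ in the range of $f$ restricted to $e_i$, $P[Y=1\mid f(X)=\alpha, E=e_i]=\alpha$. *)

From HB Require Import structures.
From mathcomp Require Import all_boot all_order all_algebra.
From mathcomp Require Import all_classical all_reals all_analysis.
Set Implicit Arguments. Unset Strict Implicit. Unset Printing Implicit Defensive.
Import Order.TTheory GRing.Theory Num.Theory.
Import numFieldNormedType.Exports.
Local Open Scope classical_set_scope.
Local Open Scope ring_scope.

Section defs.
Context {R : realType}.

Definition dotv n (u v : 'cV[R]_n) : R := (u^T *m v) 0 0.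

Definition qform n (S : 'M[R]_n) (v : 'cV[R]_n) : R := (v^T *m S *m v) 0 0.

Definition spd n (S : 'M[R]_n) : Prop :=
  S^T = S /\ forall v : 'cV[R]_n, v != 0 -> 0 < qform S v.

Definition gauss (m v : R) : set R -> \bar R :=
  if v == 0 then (\d_m : set R -> \bar R) else normal_prob m (Num.sqrt v).

(* Data model of one environment, on a probability space (Omega, P):
   Y in {1,-1}, P[Y = 1] = eta, and conditionally on Y = y the pair
   (Xns, Xsp) is jointly Gaussian with mean (y mu_ns, y mu_sp) and
   block-diagonal covariance diag(S_ns, S_sp), i.e. Xns ~ N(y mu_ns, S_ns)
   and Xsp ~ N(y mu_sp, S_sp) independently.  Joint Gaussianity is
   expressed by the law of every linear combination a_ns^T Xns + a_sp^T Xsp,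
   stated without dividing by P[Y = y]:
     P[Y = y, a^T X in B] = P[Y = y] * N(y a^T mu, a^T Sigma a)(B). *)
Definition env_model {d} {Omega : measurableType d} (P : probability Omega R)
  (Y : Omega -> R) dns dsp (Xns : Omega -> 'cV[R]_dns) (Xsp : Omega -> 'cV[R]_dsp)
  (eta : R) (mu_ns : 'cV[R]_dns) (S_ns : 'M[R]_dns)
  (mu_sp : 'cV[R]_dsp) (S_sp : 'M[R]_dsp) : Prop :=
  [/\ measurable_fun setT Y,
      (forall w, Y w = 1 \/ Y w = -1),
      (forall j, measurable_fun setT (fun w => Xns w j 0)) /\
      (forall j, measurable_fun setT (fun w => Xsp w j 0)),
      P [set w | Y w = 1] = eta%:E &
      forall y : R, (y = 1 \/ y = -1) ->
      forall (a_ns : 'cV[R]_dns) (a_sp : 'cV[R]_dsp) (B : set R), measurable B ->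
        P ([set w | Y w = y] `&`
           ((fun w => dotv a_ns (Xns w) + dotv a_sp (Xsp w)) @^-1` B))
        = (P [set w | Y w = y] *
           gauss (y * (dotv a_ns mu_ns + dotv a_sp mu_sp))
                 (qform S_ns a_ns + qform S_sp a_sp) B)%E].

(* Calibration of the score F = f(X) : Omega -> (0,1) in one environment:
   P[Y = 1 | F] = F almost surely, i.e. for every Borel B,
   P[Y = 1, F in B] = E[F ; F in B]. *)
Definition calibrated {d} {Omega : measurableType d} (P : probability Omega R)
  (Y : Omega -> R) (F : Omega -> R) : Prop :=
  forall B : set R, measurable B ->
    P ((F @^-1` B) `&` [set w | Y w = 1]) = (\int[P]_(w in F @^-1` B) (F w)%:E)%E.

End defs.

(* Write g = w^T x and h g = sigma (g - b).  In environment i the score g is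
   N(m_i, v_i)-distributed given Y = 1 and N(-m_i, v_i)-distributed given
   Y = -1, with m_i = w^T mu and v_i = w^T Sigma w, so the posterior
   P[Y = 1 | g] has odds exp(2 g m_i / v_i) times the prior odds.
   Calibration forces h to agree Lebesgue-a.e. with each of these posteriors;
   comparing two points where h agrees with all of them gives a common ratio
   m_i / v_i, which is nonzero because h is injective.
   For the a.e. statement, Lusin's theorem makes h continuous on a compact K of
   positive measure.  For a box D = K /\ h^-1 [a1, a2] /\ posterior^-1 [b1, b2],
   h(D) is then compact, so calibration applies to the event {h g in h(D)} and
   puts P[Y = 1, g in D] between a1 and a2 times P[g in D], while the posterior
   puts it between b1 and b2 times P[g in D]: disjoint intervals force D to be
   null, and countably many such boxes cover {x in K | h x <> posterior x}. *)

From HB Require Import structures.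
From mathcomp Require Import all_boot all_order all_algebra.
From mathcomp Require Import all_classical all_reals all_analysis.
From mathcomp Require Import measurable_realfun measurable_fun_approximation.
From mathcomp Require Import ring lra.
Import Order.TTheory GRing.Theory Num.Theory.
Import numFieldNormedType.Exports.
Local Open Scope classical_set_scope.
Local Open Scope ring_scope.

Set Implicit Arguments. Unset Strict Implicit. Unset Printing Implicit Defensive.

Section gaussian_posterior.
Context {R : realType}.

Definition odds (p : R) := p / (1 - p).

Lemma normal_pdf_gt0 (m s x : R) : s != 0 -> 0 < normal_pdf m s x.
Proof.
by move=> s0; rewrite normal_pdfE // mulr_gt0 ?expR_gt0 // normal_peak_gt0.
Qed.

Definition mixture_pdf (eta m1 s1 m2 s2 x : R) :=
  eta * normal_pdf m1 s1 x + (1 - eta) * normal_pdf m2 s2 x.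

Definition posterior (eta m1 s1 m2 s2 x : R) :=
  eta * normal_pdf m1 s1 x / mixture_pdf eta m1 s1 m2 s2 x.

Lemma mixture_pdf_gt0 (eta m1 s1 m2 s2 x : R) : s1 != 0 -> s2 != 0 ->
  0 <= eta <= 1 -> 0 < mixture_pdf eta m1 s1 m2 s2 x.
Proof.
move=> s10 s20 /andP[eta0 eta1]; rewrite /mixture_pdf.
have := normal_pdf_gt0 m1 x s10; have := normal_pdf_gt0 m2 x s20.
move: (normal_pdf m1 s1 x) (normal_pdf m2 s2 x) => p1 p2 p2_gt0 p1_gt0.
nra.
Qed.

Lemma posterior_ge0_le1 (eta m1 s1 m2 s2 x : R) : s1 != 0 -> s2 != 0 ->
  0 <= eta <= 1 -> 0 <= posterior eta m1 s1 m2 s2 x <= 1.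
Proof.
move=> s10 s20 eta01; have S_gt0 := mixture_pdf_gt0 m1 m2 x s10 s20 eta01.
have /andP[eta0 eta1] := eta01.
rewrite /posterior divr_ge0 ?mulr_ge0 ?normal_pdf_ge0 ?(ltW S_gt0) //=.
by rewrite ler_pdivrMr // mul1r /mixture_pdf lerDl mulr_ge0 ?normal_pdf_ge0 ?subr_ge0.
Qed.

Lemma continuous_posterior (eta m1 s1 m2 s2 : R) : s1 != 0 -> s2 != 0 ->
  0 <= eta <= 1 -> continuous (posterior eta m1 s1 m2 s2).
Proof.
move=> s10 s20 eta01 x.
have cp1 := continuous_normal_pdf (m := m1) s10.
have cp2 := continuous_normal_pdf (m := m2) s20.
rewrite /posterior /mixture_pdf.
apply: cvgM; first by apply: cvgM; [exact: cvg_cst|exact: cp1].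
apply: cvgV; first by rewrite gt_eqF // mixture_pdf_gt0.
by apply: cvgD; apply: cvgM; [exact: cvg_cst|exact: cp1|exact: cvg_cst|exact: cp2].
Qed.

Lemma posterior_prior (eta s x : R) : s != 0 -> posterior eta 0 s (- 0) s x = eta.
Proof.
move=> s0; rewrite oppr0 /posterior /mixture_pdf -mulrDl addrCA subrr addr0 mul1r.
by rewrite mulfK // gt_eqF // normal_pdf_gt0.
Qed.

Lemma normal_pdf_ratio (m v x : R) : 0 < v ->
  normal_pdf m (Num.sqrt v) x = normal_pdf (- m) (Num.sqrt v) x * expR (2 * x * (m / v)).
Proof.
move=> v_gt0; have s0 : Num.sqrt v != 0 by rewrite gt_eqF // sqrtr_gt0.
rewrite !normal_pdfE //=.
transitivity (normal_peak (Num.sqrt v) *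
  (normal_fun (- m) (Num.sqrt v) x * expR (2 * x * (m / v)))); last exact: mulrA.
congr (_ * _); rewrite /normal_fun -expRD sqr_sqrtr ?ltW //; congr expR.
by field; rewrite gt_eqF.
Qed.

Lemma posterior_oddsE (eta m v x : R) : 0 < v ->
  0 < posterior eta m (Num.sqrt v) (- m) (Num.sqrt v) x < 1 ->
  expR (2 * x * (m / v)) =
    odds (posterior eta m (Num.sqrt v) (- m) (Num.sqrt v) x) / odds eta.
Proof.
move=> v_gt0; rewrite /posterior /mixture_pdf normal_pdf_ratio //.
have s0 : Num.sqrt v != 0 by rewrite gt_eqF // sqrtr_gt0.
have q_gt0 := normal_pdf_gt0 (- m) x s0; have E_gt0 := expR_gt0 (2 * x * (m / v)).
move: (normal_pdf _ _ x) (expR _) q_gt0 E_gt0 => q E q_gt0 E_gt0.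
set p := _ / _ => /andP[p_gt0 p_lt1].
have den_neq0 : eta * (q * E) + (1 - eta) * q != 0.
  by apply: contraTneq p_gt0 => D0; rewrite /p D0 invr0 mulr0 ltxx.
have pE : p * (eta * (q * E) + (1 - eta) * q) = eta * (q * E) by rewrite divfK.
have qE_gt0 := mulr_gt0 q_gt0 E_gt0.
have eta0 : eta != 0.
  by apply: contraTneq p_gt0 => eta0; rewrite -leNgt; move: pE; rewrite eta0; nra.
have eta1 : 1 - eta != 0.
  rewrite subr_eq0; apply: contraTneq p_lt1 => eta1; rewrite -leNgt.
  by move: pE; rewrite -eta1 subrr; nra.
have p1 : 1 - p != 0 by rewrite subr_eq0 eq_sym lt_eqF.
have cross_eq : E * (eta * (1 - p)) = p * (1 - eta).
  have q0 : q != 0 by rewrite gt_eqF.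
  apply: (mulIf q0); apply/eqP; rewrite -subr_eq0; apply/eqP.
  transitivity (eta * (q * E) - p * (eta * (q * E) + (1 - eta) * q)); first ring.
  by rewrite pE subrr.
rewrite /odds -[E](mulfK (mulf_neq0 eta0 p1)) cross_eq.
by field; rewrite eta0 eta1 p1.
Qed.

Lemma expR_slope_inj (x1 x2 a b : R) : x1 != x2 ->
  expR (2 * x1 * a) = expR (2 * x1 * b) -> expR (2 * x2 * a) = expR (2 * x2 * b) -> a = b.
Proof.
move=> x12 /expR_inj e1 /expR_inj e2; have [x10|x10] := eqVneq x1 0.
  by apply: (mulfI (x := 2 * x2)) => //; rewrite mulf_neq0 // -x10 eq_sym.
by apply: (mulfI (x := 2 * x1)) => //; rewrite mulf_neq0.
Qed.

Lemma posterior_slope_neq0 (eta m v x1 x2 p1 p2 : R) : 0 < v ->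
  posterior eta m (Num.sqrt v) (- m) (Num.sqrt v) x1 = p1 ->
  posterior eta m (Num.sqrt v) (- m) (Num.sqrt v) x2 = p2 ->
  p1 != p2 -> m / v != 0.
Proof.
move=> v_gt0 <- <-; apply: contra_neq => /eqP.
rewrite mulf_eq0 invr_eq0 (gt_eqF v_gt0) orbF => /eqP ->.
by rewrite !posterior_prior // gt_eqF // sqrtr_gt0.
Qed.

Lemma posterior_slope_eq (eta m1 v1 m2 v2 x1 x2 p1 p2 : R) :
  0 < v1 -> 0 < v2 -> x1 != x2 -> 0 < p1 < 1 -> 0 < p2 < 1 ->
  posterior eta m1 (Num.sqrt v1) (- m1) (Num.sqrt v1) x1 = p1 ->
  posterior eta m2 (Num.sqrt v2) (- m2) (Num.sqrt v2) x1 = p1 ->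
  posterior eta m1 (Num.sqrt v1) (- m1) (Num.sqrt v1) x2 = p2 ->
  posterior eta m2 (Num.sqrt v2) (- m2) (Num.sqrt v2) x2 = p2 ->
  m1 / v1 = m2 / v2.
Proof.
move=> v1_gt0 v2_gt0 x12 p1_01 p2_01 e11 e21 e12 e22.
apply: (expR_slope_inj x12).
  by rewrite !(@posterior_oddsE eta) ?e11 ?e21.
by rewrite !(@posterior_oddsE eta) ?e12 ?e22.
Qed.

End gaussian_posterior.

Section real_facts.
Context {R : realType}.

Lemma sandwich_separated_eq0 (x t : \bar R) (a b c d : R) :
  t \is a fin_num -> (0 <= t)%E ->
  (a%:E * t <= x <= b%:E * t)%E -> (c%:E * t <= x <= d%:E * t)%E ->
  b < c \/ d < a -> t = 0%E.
Proof.
move=> /fineK <-; move: (fine t) => {}t; rewrite lee_fin -!EFinM => t0.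
case: x => [x| |] /andP[axt xbt] /andP[cxt xdt] sep; last 2 first.
- by move: xbt; rewrite leye_eq.
- by move: axt; rewrite leeNy_eq.
move: axt xbt cxt xdt; rewrite !lee_fin => axt xbt cxt xdt.
by congr EFin; case: sep => sep; nra.
Qed.

Lemma grid_between (u v : R) : 0 <= u < v ->
  exists n j : nat, u <= j%:R / n.+1%:R /\ j.+1%:R / n.+1%:R <= v.
Proof.
move=> /andP[u0 uv]; pose n := Num.truncn (2 / (v - u)); pose N : R := n.+1%:R.
have N_gt0 : 0 < N by rewrite ltr0n.
have gap : 2 < N * (v - u).
  by rewrite -ltr_pdivrMr ?subr_gt0 //; exact: truncnS_gt.
pose j := Num.truncn (u * N).
have uN : j%:R <= u * N by rewrite truncn_le mulr_ge0 // ltW.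
exists n, j.+1; split; first by rewrite ler_pdivlMr //; apply: ltW; exact: truncnS_gt.
by rewrite ler_pdivrMr // -addn2 natrD; nra.
Qed.

End real_facts.

Section measure_facts.
Context {R : realType}.
Local Notation mu := (@lebesgue_measure R).

Lemma gt0_integral_eq0 d (T : measurableType d) (nu : {measure set T -> \bar R})
    (D : set T) (f : T -> R) : measurable D -> measurable_fun D f ->
  (forall x, D x -> 0 < f x) -> (\int[nu]_(x in D) (f x)%:E = 0)%E -> nu D = 0%E.
Proof.
move=> mD mf f_gt0 intf0; have mEf : measurable_fun D (EFin \o f) by exact/measurable_EFinP.
have absf0 : (\int[nu]_(x in D) `|(f x)%:E| = 0)%E.
  rewrite -intf0; apply: eq_integral => x; rewrite inE => Dx.
  by rewrite gee0_abs // lee_fin ltW // f_gt0.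
have [N [mN N0 DN]] := (ae_eq_integral_abs nu mD mEf).1 absf0.
apply/eqP; rewrite -measure_le0 -N0 le_measure ?inE // => x Dx.
by apply: DN => /= /(_ Dx) [] /eqP; rewrite gt_eqF // f_gt0.
Qed.

Lemma normal_probZ (c m s : R) (B : set R) : measurable B -> 0 <= c ->
  (c%:E * normal_prob m s B = \int[mu]_(x in B) (c * normal_pdf m s x)%:E)%E.
Proof.
move=> mB c0; rewrite /normal_prob -ge0_integralZl_EFin //.
- by move=> x _; rewrite lee_fin normal_pdf_ge0.
- by apply/measurable_EFinP; exact: measurable_funTS (measurable_normal_pdf m s).
Qed.

Lemma negligible_fin_bigcup d (T : measurableType d) (nu : {measure set T -> \bar R})
    (I : finType) (F : I -> set T) :
  (forall i, nu.-negligible (F i)) -> nu.-negligible (\bigcup_i F i).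
Proof.
move=> nF; apply: (@negligibleS _ _ _ nu (\big[setU/set0]_i F i)).
  by move=> x [i _ Fix]; rewrite (bigD1 i) //; left.
apply: (big_ind (fun A => nu.-negligible A)) => //; first exact: negligible_set0.
by move=> A B; apply: negligibleU.
Qed.

Lemma not_negligible_two_points (A : set R) : ~ mu.-negligible A ->
  exists x1 x2, [/\ A x1, A x2 & x1 != x2].
Proof.
move=> nA; have [x0 Ax0] : exists x0, A x0.
  apply: contra_notP nA => /forallNP A0.
  by apply: (negligibleS _ (negligible_set0 mu)) => x /A0.
have [x1 Ax1 x10] : exists2 x1, A x1 & x1 != x0.
  apply: contra_notP nA => /forall2NP A1.
  apply: (negligibleS _ ((negligibleP mu (measurable_set1 x0)).2 (lebesgue_measure_set1 x0))).
  by move=> x Ax; case: (A1 x) => // /negP; rewrite negbK => /eqP.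
by exists x1, x0.
Qed.

Lemma two_points_outside_negligible (K N : set R) :
  measurable K -> mu K != 0%E -> mu.-negligible N ->
  exists x1 x2, [/\ K x1 /\ ~ N x1, K x2 /\ ~ N x2 & x1 != x2].
Proof.
move=> mK K0 nN; apply: not_negligible_two_points => nKN.
suff /(negligibleP mu mK) : mu.-negligible K by apply/eqP.
apply: negligibleS (negligibleU nKN nN) => x Kx.
by have [Nx|Nx] := pselect (N x); [right|left].
Qed.

Lemma measurable_image_box (K : set R) (h g : R -> R) (a1 a2 b1 b2 : R) :
  compact K -> {within K, continuous h} -> continuous g ->
  measurable (h @` (K `&` h @^-1` `[a1, a2] `&` g @^-1` `[b1, b2])).
Proof.
move=> cK hK cg.
have -> : h @` (K `&` h @^-1` `[a1, a2] `&` g @^-1` `[b1, b2]) =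
    h @` (K `&` g @^-1` `[b1, b2]) `&` `[a1, a2].
  apply/seteqP; split => [_ [x [[Kx hx] gx] <-]|_ [[x [Kx gx] <-] hx]]; last by exists x.
  by split => //; exists x.
apply: closed_measurable; apply: closedI; last exact: interval_closed.
apply: compact_closed => //; apply: continuous_compact.
  exact: continuous_subspaceW hK.
apply: compact_closedI => //; apply: preimage_closed => [x _|]; last exact: interval_closed.
exact: cg.
Qed.

Lemma lusin_compact_continuous (h : R -> R) : measurable_fun setT h ->
  exists K, [/\ compact K, mu K != 0%E & {within K, continuous h}].
Proof.
move=> mh; pose A := `[(0 : R), 1]%classic.
have mA : measurable A by exact: measurable_itv.
have muA : mu A = 1%E by rewrite lebesgue_measure_itv /= lte01 oppr0 adde0.
have finA : (mu A < +oo)%E by rewrite muA ltry.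
have [K [cK KA AK hK]] := measurable_almost_continuous mA finA ltr01
  (measurable_funS measurableT (subsetT A) mh).
exists K; split => //; apply/eqP => K0.
have mK := compact_measurable cK.
have : mu A = (mu (A `\` K) + mu K)%E by rewrite -{2}(setIidr KA); exact: measureDI.
have AK' : (mu (A `\` K) < 1)%E := AK.
by rewrite K0 adde0 muA => AK1; move: AK'; rewrite -AK1 ltxx.
Qed.

End measure_facts.

Section calibrated_score.
Context {R : realType} d (Omega : measurableType d) (P : probability Omega R).
Local Notation mu := (@lebesgue_measure R).
Variables (Y G : Omega -> R) (h : R -> R).
Hypotheses (mY : measurable_fun setT Y) (mG : measurable_fun setT G).
Hypotheses (mh : measurable_fun setT h) (h_inj : injective h).
Hypothesis cal : calibrated P Y (fun w => h (G w)).

Lemma calibrated_bound (D : set R) (a1 a2 : R) :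
  measurable D -> measurable (h @` D) -> 0 <= a1 ->
  (forall x, D x -> a1 <= h x <= a2) ->
  (a1%:E * P (G @^-1` D) <= P ([set w | Y w = 1%R] `&` G @^-1` D)
     <= a2%:E * P (G @^-1` D))%E.
Proof.
move=> mD mhD a10 hD.
have mGD : measurable (G @^-1` D) by rewrite -[_ @^-1` _]setTI; exact: mG.
have preD : (fun w => h (G w)) @^-1` (h @` D) = G @^-1` D.
  by apply/seteqP; split => w /=; [case=> x Dx /h_inj <-|exists (G w)].
rewrite setIC -preD cal // preD -!integral_cst //.
have mhG : measurable_fun (G @^-1` D) (fun w => (h (G w))%:E).
  by apply/measurable_EFinP/measurable_funTS; exact: measurableT_comp.
apply/andP; split; apply: ge0_le_integral => //.
all: try by move=> w /hD /andP[].
by move=> w /hD /andP[a1h _]; rewrite lee_fin (le_trans a10).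
Qed.

Variables (eta m1 s1 m2 s2 : R).
Hypotheses (s10 : s1 != 0) (s20 : s2 != 0) (Y_pm : forall w, Y w = 1 \/ Y w = -1).
Hypothesis law1 : forall B, measurable B ->
  P ([set w | Y w = 1] `&` G @^-1` B) = (eta%:E * normal_prob m1 s1 B)%E.
Hypothesis lawN : forall B, measurable B ->
  P ([set w | Y w = -1] `&` G @^-1` B) = ((1 - eta)%:E * normal_prob m2 s2 B)%E.

Let eta01 : 0 <= eta <= 1.
Proof.
have eta0 : (0 <= eta%:E)%E.
  by rewrite -[eta%:E]mule1 -(probability_setT (normal_prob m1 s1)) -law1.
have eta1 : (0 <= (1 - eta)%:E)%E.
  by rewrite -[_%:E]mule1 -(probability_setT (normal_prob m2 s2)) -lawN.
move: eta0 eta1; rewrite !lee_fin subr_ge0 => eta0 eta1.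
exact/andP.
Qed.

Local Notation S := (mixture_pdf eta m1 s1 m2 s2).
Local Notation post := (posterior eta m1 s1 m2 s2).

Let measurable_mixture_pdf (D : set R) : measurable_fun D (fun x => (S x)%:E).
Proof.
apply/measurable_EFinP/measurable_funTS.
by apply: measurable_funD; apply: measurable_funM => //; exact: measurable_normal_pdf.
Qed.

Lemma class1_integralE (B : set R) : measurable B ->
  P ([set w | Y w = 1] `&` G @^-1` B) = (\int[mu]_(x in B) (eta * normal_pdf m1 s1 x)%:E)%E.
Proof. by move=> mB; rewrite law1 // normal_probZ //; case/andP: eta01. Qed.

Lemma preimage_mixtureE (B : set R) : measurable B ->
  P (G @^-1` B) = (\int[mu]_(x in B) (S x)%:E)%E.
Proof.
move=> mB; have /andP[eta0 eta1] := eta01.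
have mYG y : measurable ([set w | Y w = y] `&` G @^-1` B).
  apply: measurableI; rewrite -[X in measurable X]setTI.
    exact: (mY measurableT (measurable_set1 y)).
  exact: (mG measurableT mB).
transitivity (P ([set w | Y w = 1%R] `&` G @^-1` B) +
              P ([set w | Y w = (-1)%R] `&` G @^-1` B))%E.
  rewrite -measureU //; last first.
    by apply/seteqP; split => // w [[/= -> _] []]; lra.
  by rewrite -setIUl; congr (P _); apply/esym/setIidr => w _; exact: Y_pm.
have mpdf (c m s : R) : measurable_fun B (fun x => (c * normal_pdf m s x)%:E).
  apply/(measurable_EFinP B); apply: measurable_funM => //.
  exact: measurable_funTS (measurable_normal_pdf _ _).
rewrite law1 // lawN // !normal_probZ ?subr_ge0 // -ge0_integralD //.
all: try by move=> x _; rewrite lee_fin mulr_ge0 ?normal_pdf_ge0 ?subr_ge0.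
all: exact: mpdf.
Qed.

Lemma posterior_integral_bound (D : set R) (b1 b2 : R) :
  measurable D -> 0 <= b1 -> 0 <= b2 -> (forall x, D x -> b1 <= post x <= b2) ->
  (b1%:E * \int[mu]_(x in D) (S x)%:E <= \int[mu]_(x in D) (eta * normal_pdf m1 s1 x)%:E
     <= b2%:E * \int[mu]_(x in D) (S x)%:E)%E.
Proof.
move=> mD b10 b20 postD; have /andP[eta0 eta1] := eta01.
have S_gt0 x : 0 < S x by exact: mixture_pdf_gt0.
have S_ge0 x : D x -> (0 <= (S x)%:E)%E by rewrite lee_fin ltW.
have mS := @measurable_mixture_pdf D.
have mp1 : measurable_fun D (fun x => (eta * normal_pdf m1 s1 x)%:E).
  apply/measurable_EFinP; apply: measurable_funM => //.
  exact: measurable_funTS (measurable_normal_pdf _ _).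
have intSZ b : 0 <= b ->
    (b%:E * \int[mu]_(x in D) (S x)%:E = \int[mu]_(x in D) (b%:E * (S x)%:E))%E.
  by move=> b0; rewrite ge0_integralZl_EFin.
rewrite !intSZ //.
apply/andP; split; apply: ge0_le_integral => //; try exact: measurable_funeM.
- by move=> x Dx; rewrite mule_ge0 // S_ge0.
- by move=> x /postD /andP[+ _]; rewrite lee_fin /posterior ler_pdivlMr.
- by move=> x _; rewrite lee_fin mulr_ge0 ?normal_pdf_ge0.
- by move=> x /postD /andP[_]; rewrite lee_fin /posterior ler_pdivrMr.
Qed.

Lemma calibrated_posterior_box_null (K : set R) (a1 a2 b1 b2 : R) :
  compact K -> {within K, continuous h} -> 0 <= a1 -> 0 <= b1 -> 0 <= b2 ->
  a2 < b1 \/ b2 < a1 ->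
  mu.-negligible (K `&` h @^-1` `[a1, a2] `&` post @^-1` `[b1, b2]).
Proof.
move=> cK hK a10 b10 b20 sep; have /andP[eta0 eta1] := eta01.
have cpost : continuous post := continuous_posterior s10 s20 eta01.
pose D := K `&` h @^-1` `[a1, a2] `&` post @^-1` `[b1, b2].
have mD : measurable D.
  apply: measurableI; last first.
    apply: closed_measurable; apply: preimage_closed => [x _|]; last exact: interval_closed.
    exact: cpost.
  apply: measurableI; first exact: compact_measurable.
  by rewrite -[X in measurable X]setTI; apply: mh.
have mhD : measurable (h @` D) by exact: measurable_image_box.
have hD x : D x -> a1 <= h x <= a2 by case=> [[_]] /=; rewrite in_itv.
have postD x : D x -> b1 <= post x <= b2 by case=> _ /=; rewrite in_itv.
have mGD : measurable (G @^-1` D) by rewrite -[X in measurable X]setTI; exact: mG.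
have := calibrated_bound mD mhD a10 hD.
rewrite class1_integralE // preimage_mixtureE // => calD.
have postbD := posterior_integral_bound mD b10 b20 postD.
apply/(negligibleP mu mD); apply: (gt0_integral_eq0 (nu := mu) mD (f := S)).
- apply: measurable_funTS; apply: measurable_funD; apply: measurable_funM => //;
    exact: measurable_normal_pdf.
- by move=> x _; exact: mixture_pdf_gt0.
apply: sandwich_separated_eq0 calD postbD sep.
- by rewrite -preimage_mixtureE // fin_num_measure.
- by apply: integral_ge0 => x _; rewrite lee_fin ltW // mixture_pdf_gt0.
Qed.

Lemma calibrated_posterior_ae (K : set R) :
  compact K -> {within K, continuous h} -> (forall x, 0 <= h x <= 1) ->
  mu.-negligible [set x | K x /\ h x != post x].
Proof.
move=> cK hK h01; pose grid (n j : nat) : R := j%:R / n.+1%:R.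
have grid_ge0 n j : 0 <= grid n j by rewrite divr_ge0.
have gridS n j : grid n j < grid n j.+1 by rewrite ltr_pM2r ?invr_gt0 ?ltr0n // ltr_nat.
pose below n j := K `&` h @^-1` `[0, grid n j] `&` post @^-1` `[grid n j.+1, 1].
pose above n j := K `&` h @^-1` `[grid n j.+1, 1] `&` post @^-1` `[0, grid n j].
pose cover n := \bigcup_j (below n j `|` above n j).
apply: (negligibleS _ (@negligible_bigcup _ _ _ mu cover _)).
  move=> x [Kx /= hpx]; have /andP[h0 h1] := h01 x.
  have /andP[p0 p1] := posterior_ge0_le1 m1 m2 x s10 s20 eta01.
  have [hp|ph|hpE] := ltgtP (h x) (post x); last by rewrite hpE eqxx in hpx.
  - have [n [j [hj jp]]] := grid_between (u := h x) (v := post x) (introT andP (conj h0 hp)).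
    exists n => //; exists j => //; left.
    by split; [split|]; rewrite //= in_itv; apply/andP; split.
  - have [n [j [pj jh]]] := grid_between (u := post x) (v := h x) (introT andP (conj p0 ph)).
    exists n => //; exists j => //; right.
    by split; [split|]; rewrite //= in_itv; apply/andP; split.
move=> n; apply: negligible_bigcup => j; apply: negligibleU.
- by apply: calibrated_posterior_box_null => //; left.
- by apply: calibrated_posterior_box_null => //; right.
Qed.

End calibrated_score.

Section quadratic_forms.
Context {R : realType}.

Lemma dotvE n (a u : 'cV[R]_n) : dotv a u = \sum_j a j 0 * u j 0.
Proof. by rewrite /dotv mxE; apply: eq_bigr => j _; rewrite mxE. Qed.

Lemma measurable_dotv d (T : measurableType d) n (a : 'cV[R]_n) (X : T -> 'cV[R]_n) :
  (forall j, measurable_fun setT (fun w => X w j 0)) ->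
  measurable_fun setT (fun w => dotv a (X w)).
Proof.
move=> mX; under eq_fun do rewrite dotvE.
by apply: measurable_sum => j; apply: measurable_funM.
Qed.

Lemma spd_qform_ge0 n (S : 'M[R]_n) (v : 'cV[R]_n) : spd S -> 0 <= qform S v.
Proof.
move=> [_ S_pos]; have [->|v0] := eqVneq v 0; last exact/ltW/S_pos.
by rewrite /qform mulmx0 mxE.
Qed.

Lemma spd_block_qform_gt0 n1 n2 (S1 : 'M[R]_n1) (S2 : 'M[R]_n2) v1 v2 :
  spd S1 -> spd S2 -> ~ (v1 = 0 /\ v2 = 0) -> 0 < qform S1 v1 + qform S2 v2.
Proof.
move=> spd1 spd2 v_neq0; have [v10|v10] := eqVneq v1 0.
  have [v20|v20] := eqVneq v2 0; first by case: v_neq0.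
  by rewrite ltr_wpDl ?spd_qform_ge0 //; case: spd2 => _ ->.
by rewrite ltr_wpDr ?spd_qform_ge0 //; case: spd1 => _ ->.
Qed.

End quadratic_forms.

Section environment_score.
Context {R : realType} d (Omega : measurableType d) (P : probability Omega R).
Local Notation mu := (@lebesgue_measure R).
Variables (Y : Omega -> R) (dns dsp : nat).
Variables (Xns : Omega -> 'cV[R]_dns) (Xsp : Omega -> 'cV[R]_dsp).
Variables (eta : R) (mu_ns : 'cV[R]_dns) (S_ns : 'M[R]_dns).
Variables (mu_sp : 'cV[R]_dsp) (S_sp : 'M[R]_dsp).
Hypothesis env : env_model P Y Xns Xsp eta mu_ns S_ns mu_sp S_sp.
Variables (w_ns : 'cV[R]_dns) (w_sp : 'cV[R]_dsp).
Let G w := dotv w_ns (Xns w) + dotv w_sp (Xsp w).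
Let m := dotv w_ns mu_ns + dotv w_sp mu_sp.
Let v := qform S_ns w_ns + qform S_sp w_sp.
Hypothesis v_gt0 : 0 < v.

Let mG : measurable_fun setT G.
Proof.
by have [_ _ [mXns mXsp] _ _] := env; apply: measurable_funD; apply: measurable_dotv.
Qed.

Let score_law (y : R) (B : set R) : y = 1 \/ y = -1 -> measurable B ->
  P ([set w | Y w = y] `&` G @^-1` B) =
    (P [set w | Y w = y] * normal_prob (y * m) (Num.sqrt v) B)%E.
Proof.
have [_ _ _ _ law] := env; move=> y_pm mB.
by rewrite law // /gauss -/m -/v gt_eqF.
Qed.

Let prob_neg : P [set w | Y w = -1] = (1 - eta)%:E.
Proof.
have [mY Y_pm _ PY1 _] := env.
have mY1 : measurable [set w | Y w = 1].
  by rewrite -[X in measurable X]setTI; exact: (mY measurableT _ (measurable_set1 1)).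
have -> : [set w | Y w = -1] = ~` [set w | Y w = 1].
  apply/seteqP; split => w /=; last by case: (Y_pm w).
  by move=> ->; lra.
by rewrite probability_setC // PY1 EFinB.
Qed.

Lemma env_calibrated_posterior_ae (h : R -> R) (K : set R) :
  measurable_fun setT h -> injective h -> (forall x, 0 <= h x <= 1) ->
  calibrated P Y (fun w => h (G w)) -> compact K -> {within K, continuous h} ->
  mu.-negligible [set x | K x /\
    h x != posterior eta m (Num.sqrt v) (- m) (Num.sqrt v) x].
Proof.
have [mY Y_pm _ PY1 _] := env.
move=> mh h_inj h01 cal cK hK; have s0 : Num.sqrt v != 0 by rewrite gt_eqF ?sqrtr_gt0.
apply: (calibrated_posterior_ae mY mG mh h_inj cal s0 s0 Y_pm) => // B mB.
- by rewrite score_law ?mul1r ?PY1 //; left.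
- by rewrite score_law ?mulN1r ?prob_neg //; right.
Qed.

End environment_score.

Theorem lemmaS2 (R : realType) (k dns dsp : nat) (hk : (1 <= k)%N)
  (eta : R) (mu_ns : 'cV[R]_dns) (S_ns : 'M[R]_dns)
  (mu : 'I_k -> 'cV[R]_dsp) (S : 'I_k -> 'M[R]_dsp)
  (d : 'I_k -> measure_display) (Omega : forall i : 'I_k, measurableType (d i))
  (P : forall i : 'I_k, probability (Omega i) R)
  (Y : forall i : 'I_k, Omega i -> R)
  (Xns : forall i : 'I_k, Omega i -> 'cV[R]_dns)
  (Xsp : forall i : 'I_k, Omega i -> 'cV[R]_dsp)
  (sigma : R -> R) (w_ns : 'cV[R]_dns) (w_sp : 'cV[R]_dsp) (b : R) :
  spd S_ns -> (forall i, spd (S i)) ->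
  (forall i, env_model (P i) (Y i) (Xns i) (Xsp i) eta mu_ns S_ns (mu i) (S i)) ->
  (* sigma : R -> (0,1) invertible (a bijection onto (0,1)), measurable *)
  (forall z, 0 < sigma z < 1) -> injective sigma ->
  (forall p, 0 < p < 1 -> exists z, sigma z = p) ->
  measurable_fun setT sigma ->
  (* f(x; w, b) = sigma(w^T x - b) is calibrated on all k environments *)
  (forall i, calibrated (P i) (Y i)
     (fun om => sigma (dotv w_ns (Xns i om) + dotv w_sp (Xsp i om) - b))) ->
  (w_ns = 0 /\ w_sp = 0) \/
  exists t : R, t != 0 /\
    forall i : 'I_k,
      (dotv w_ns mu_ns + dotv w_sp (mu i)) /
      (qform S_ns w_ns + qform (S i) w_sp) = t.
Proof.
move=> spd_ns spd_S env sig01 sig_inj _ msig cal.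
have [[-> ->]|w_neq0] := pselect (w_ns = 0 /\ w_sp = 0); [by left|right].
pose m i := dotv w_ns mu_ns + dotv w_sp (mu i).
pose v i := qform S_ns w_ns + qform (S i) w_sp.
have v_gt0 i : 0 < v i := spd_block_qform_gt0 spd_ns (spd_S i) w_neq0.
pose h x := sigma (x - b).
have mh : measurable_fun setT h by apply: measurableT_comp => //; exact: measurable_funB.
have h_inj : injective h by move=> x y /sig_inj /addIr.
have h01 x : 0 < h x < 1 := sig01 (x - b).
have [K [cK K_neq0 hK]] := lusin_compact_continuous mh.
pose post i := posterior eta (m i) (Num.sqrt (v i)) (- m i) (Num.sqrt (v i)).
pose N := \bigcup_i [set x | K x /\ h x != post i x].
have nN : (@lebesgue_measure R).-negligible N.
  apply: negligible_fin_bigcup => i.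
  apply: (env_calibrated_posterior_ae (env i) (v_gt0 i)) => // x.
  by have /andP[? ?] := h01 x; apply/andP; split; exact: ltW.
have h_post i x : K x -> ~ N x -> post i x = h x.
  move=> Kx Nx; apply/eqP; apply: contra_notT Nx => hx.
  by exists i => //; split; rewrite // eq_sym.
have [x1 [x2 [[K1 N1] [K2 N2] x12]]] :=
  two_points_outside_negligible (compact_measurable cK) K_neq0 nN.
pose i0 := Ordinal hk; exists (m i0 / v i0); split => [|i].
  apply: (posterior_slope_neq0 (v_gt0 i0) (h_post i0 x1 K1 N1) (h_post i0 x2 K2 N2)).
  by rewrite (inj_eq h_inj).
exact: (posterior_slope_eq (v_gt0 i) (v_gt0 i0) x12 (h01 x1) (h01 x2)
  (h_post i x1 K1 N1) (h_post i0 x1 K1 N1) (h_post i x2 K2 N2) (h_post i0 x2 K2 N2)).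
Qed.
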